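(* Let $\mathcal{A}=\{H_i=\{v:\langle\alpha_i,v\rangle=0\}:i=1,\dots,m\}$ be a linear hyperplane arrangement in $\mathbb{R}^n$, $U\in\mathrm{Gr}(k,n)$ with $\dim(U\cap T)=l$, and $I\subseteq[m]$. The following are equivalent: (1) $I$ is a basis of the matroid $\mathfrak{M}_{\mathcal{A}}(U)$; (2) $|I|=k-l$ and $\{\beta_i:i\in I\}$ is linearly independent; (3) $|I|=k-l$ and $\bigcap_{i\in I}H_i\in L_U(\mathcal{A})$.
   Context: $\alpha_i\ne0$, $T=\bigcap_{i=1}^mH_i$, $\beta_i$ is the orthogonal projection of $\alpha_i$ onto $U$, and $\mathfrak{M}_{\mathcal{A}}(U)$ is the matroid on $[m]$ with rank function $\operatorname{rk}(I)=\dim\operatorname{span}\{\beta_i:i\in I\}$. $L(\mathcal{A})$ is the set of intersections of subfamilies of $\mathcal{A}$ (including $\mathbb{R}^n$), $L_j(\mathcal{A})$ those of codimension $j$. For $U$ with $\dim(U\cap T)=l$, $L_U(\mathcal{A}):=\{X\in L_{k-l}(\mathcal{A}): X\oplus(U\cap(U^\perp+T^\perp))=\mathbb{R}^n\}$ (equivalently, those $X\in L_{k-l}(\mathcal{A})$ with $\Delta(U\cap(U^\perp+T^\perp))\notin H(X)$, where $\Delta$ denotes Plücker coordinates and $H(X)=\{x\in\mathbb{R}^{\binom{[n]}{k-l}}:\sum_I(-1)^{(k-l)(k-l+1)/2+\sum_{i\in I}i}\Delta_{[n]\setminus I}(X)x_I=0\}$). *)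

(* Vectors of R^n are row vectors 'rV[R]_n; linear subspaces
   of R^n are represented (as in mxalgebra) by square matrices 'M[R]_n via
   their row spaces, compared with the %MS operations. *)
From HB Require Import structures.
From mathcomp Require Import all_boot all_order all_algebra.
Set Implicit Arguments. Unset Strict Implicit. Unset Printing Implicit Defensive.
Import Order.TTheory GRing.Theory Num.Theory.
Local Open Scope ring_scope.

Section Arr.
Variables (R : realFieldType) (n m : nat).

(* orthogonal complement (standard inner product <u,v> = u *m v^T) *)
Definition perpmx (A : 'M[R]_n) : 'M[R]_n := kermx A^T.

Definition hyp (alpha : 'I_m -> 'rV[R]_n) (i : 'I_m) : 'M[R]_n :=
  kermx (alpha i)^T.

(* intersection of the H_i, i in J  (the whole space for J empty) *)
Definition flat (alpha : 'I_m -> 'rV[R]_n) (J : {set 'I_m}) : 'M[R]_n :=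
  (\bigcap_(i in J) hyp alpha i)%MS.

Definition centre (alpha : 'I_m -> 'rV[R]_n) : 'M[R]_n := flat alpha setT.

Definition oproj (U : 'M[R]_n) (a : 'rV[R]_n) : 'rV[R]_n :=
  a *m proj_mx U (perpmx U).

Definition beta (alpha : 'I_m -> 'rV[R]_n) (U : 'M[R]_n) (i : 'I_m) :=
  oproj U (alpha i).

Definition mrk (alpha : 'I_m -> 'rV[R]_n) (U : 'M[R]_n) (I : {set 'I_m}) : nat :=
  \rank (\sum_(i in I) <<beta alpha U i>>)%MS.

Definition mindep alpha U (I : {set 'I_m}) : bool := mrk alpha U I == #|I|.

Definition mbasis alpha U (I : {set 'I_m}) : Prop :=
  mindep alpha U I /\ forall J : {set 'I_m}, I \proper J -> ~~ mindep alpha U J.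

Definition lin_indep (v : 'I_m -> 'rV[R]_n) (I : {set 'I_m}) : bool :=
  row_free (\matrix_(j < #|I|) v (enum_val j)).

Definition in_Lj (alpha : 'I_m -> 'rV[R]_n) (j : nat) (X : 'M[R]_n) : Prop :=
  (exists J : {set 'I_m}, (X == flat alpha J)%MS) /\ (n - \rank X)%N = j.

Definition in_LU (alpha : 'I_m -> 'rV[R]_n) (U : 'M[R]_n) (X : 'M[R]_n) : Prop :=
  let T := centre alpha in
  let k := \rank U in
  let l := \rank (U :&: T)%MS in
  let W := (U :&: (perpmx U + perpmx T))%MS in
  in_Lj alpha (k - l)%N X /\ (X + W == 1%:M)%MS /\ (X :&: W == (0 : 'M[R]_n))%MS.

End Arr.

(* The projections beta_i all lie in W = U :&: (U^perp + T^perp), which is the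
   orthogonal complement of U :&: T inside U and so has dimension k - l.  They
   span W: for w in U we have <w, beta_i> = <w, alpha_i>, so a vector of W
   orthogonal to every beta_i lies in T, hence in (U :&: T) :&: (U :&: T)^perp = 0.
   Thus the matroid has rank k - l, which gives (1) <-> (2).  The same identity
   shows that X_I :&: W is the part of W orthogonal to the beta_i, i in I; it
   vanishes iff the beta_i span W.  Independence of the beta_i forces that of the
   alpha_i, so X_I then has codimension |I| = k - l and is a complement of W. *)

From HB Require Import structures.
From mathcomp Require Import all_boot all_order all_algebra zify.
Set Implicit Arguments. Unset Strict Implicit. Unset Printing Implicit Defensive.
Import Order.TTheory GRing.Theory Num.Theory.
Local Open Scope ring_scope.

Local Notation span v J := (\sum_(i in J) <<v i>>)%MS.

Section Span.
Variables (F : fieldType) (n : nat).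

Lemma sub_kermx_trC p q (A : 'M[F]_(p, n)) (B : 'M[F]_(q, n)) :
  (A <= kermx B^T)%MS = (B <= kermx A^T)%MS.
Proof. by rewrite !sub_kermx -(inj_eq trmx_inj) trmx_mul trmxK trmx0. Qed.

Variables (I : finType) (v : I -> 'rV[F]_n).

Lemma sub_kermx_tr_span p (w : 'M[F]_(p, n)) (J : {set I}) :
  (w <= kermx (span v J)^T)%MS = [forall i in J, w *m (v i)^T == 0].
Proof.
rewrite sub_kermx_trC; apply/sumsmx_subP/forall_inP=> wJ i /wJ;
  by rewrite genmxE sub_kermx_trC sub_kermx.
Qed.

Lemma mxrank_span_le_card (J : {set I}) : (\rank (span v J) <= #|J|)%N.
Proof.
rewrite -sum1_card.
elim/big_ind2: _ => [|A a B b leAa leBb|i _]; first by rewrite mxrank0.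
- exact: leq_trans (mxrank_adds_leqif A B) (leq_add leAa leBb).
- by rewrite genmxE rank_leq_row.
Qed.

Lemma span_subset (J K : {set I}) : J \subset K -> (span v J <= span v K)%MS.
Proof.
move/subsetP=> sJK; apply/sumsmx_subP=> i Ji.
by rewrite (sumsmx_sup i) ?sJK.
Qed.

Lemma maximal_free_spanP (J : {set I}) : \rank (span v J) = #|J| ->
  (forall K : {set I}, J \proper K -> \rank (span v K) != #|K|) <->
  (span v [set: I] <= span v J)%MS.
Proof.
move=> freeJ; split=> [maxJ | sTJ K ltJK].
  apply/sumsmx_subP=> j _; rewrite genmxE; apply: contraT => vjNJ.
  have jNJ : j \notin J by apply: contra vjNJ => Jj; rewrite (sumsmx_sup j) ?genmxE.
  have ltJjJ : (\rank (span v J) < \rank (span v (j |: J)))%N.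
    apply: rank_ltmx; rewrite ltmxE span_subset ?subsetUr //=.
    apply: contra vjNJ; apply: submx_trans.
    by rewrite (sumsmx_sup j) ?setU11 ?genmxE.
  have /maxJ : J \proper j |: J by apply: properUr; rewrite sub1set.
  have := mxrank_span_le_card (j |: J).
  by rewrite cardsU1 jNJ -freeJ; lia.
rewrite neq_ltn (leq_trans _ (proper_card ltJK)) // ltnS -freeJ.
exact: leq_trans (mxrankS (span_subset (subsetT K))) (mxrankS sTJ).
Qed.

End Span.

Section Orthogonality.
Variables (R : realFieldType) (n : nat).
Implicit Types A B S V : 'M[R]_n.

Lemma perpmxS A B : (A <= B)%MS -> (perpmx B <= perpmx A)%MS.
Proof. by move=> sAB; rewrite /perpmx sub_kermx_trC (submx_trans sAB) // -sub_kermx_trC. Qed.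

Lemma mxrank_perpmx A : \rank (perpmx A) = (n - \rank A)%N.
Proof. by rewrite /perpmx mxrank_ker mxrank_tr. Qed.

Lemma mulmx_trmx_eq0 p (M : 'M[R]_(p, n)) : (M *m M^T == 0) = (M == 0).
Proof.
apply/eqP/eqP=> [MMt0|->]; last by rewrite mul0mx.
apply/matrixP=> i j; rewrite mxE.
have : (M *m M^T) i i = 0 by rewrite MMt0 mxE.
rewrite mxE => /eqP; rewrite psumr_eq0 => [/allP/(_ j)|k _]; last first.
  by rewrite mxE -expr2 sqr_ge0.
by rewrite mem_index_enum mxE mulf_eq0 orbb => /(_ isT)/eqP.
Qed.

Lemma capmx_perpmx A : (A :&: perpmx A)%MS = 0.
Proof.
apply/eqP; rewrite -mulmx_trmx_eq0 -sub_kermx (submx_trans (capmxSl _ _)) //.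
by rewrite sub_kermx_trC; apply: capmxSr.
Qed.

Lemma row_full_addsmx_perpmx A : row_full (A + perpmx A)%MS.
Proof.
rewrite /row_full; have := mxrank_sum_cap A (perpmx A).
by rewrite capmx_perpmx mxrank0 mxrank_perpmx addn0 => ->; rewrite subnKC ?rank_leq_col.
Qed.

Lemma mxrank_cap_perpmx A V :
  (V <= A)%MS -> \rank (A :&: perpmx V) = (\rank A - \rank V)%N.
Proof.
move=> sVA; have := mxrank_sum_cap A (perpmx V).
have -> : \rank (A + perpmx V)%MS = n.
  apply/eqP; rewrite eqn_leq rank_leq_col /=.
  by rewrite -{1}(eqP (row_full_addsmx_perpmx V)) mxrankS ?addsmxS.
rewrite mxrank_perpmx; have := mxrankS sVA; have := rank_leq_col A; lia.
Qed.

Lemma mxrank_le_cap_perpmx p (W : 'M[R]_(p, n)) S :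
  (\rank W <= \rank S + \rank (W :&: perpmx S))%N.
Proof.
have := mxrank_sum_cap W (perpmx S); rewrite mxrank_perpmx.
have := rank_leq_col (W + perpmx S)%MS; have := rank_leq_col S; lia.
Qed.

Lemma perpmx_adds A B : (perpmx (A + B)%MS :=: perpmx A :&: perpmx B)%MS.
Proof.
apply/eqmxP/andP; split.
  by rewrite sub_capmx !perpmxS ?addsmxSl ?addsmxSr.
rewrite /perpmx sub_kermx_trC addsmx_sub (sub_kermx_trC A) (sub_kermx_trC B).
by rewrite capmxSl capmxSr.
Qed.

Lemma perpmx_cap A B : (perpmx (A :&: B)%MS :=: perpmx A + perpmx B)%MS.
Proof.
have sub : (perpmx A + perpmx B <= perpmx (A :&: B)%MS)%MS.
  by rewrite addsmx_sub !perpmxS ?capmxSl ?capmxSr.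
apply/eqmx_sym/eqmxP; rewrite -(mxrank_leqif_eq sub) eqn_leq mxrankS //=.
have := mxrank_sum_cap (perpmx A) (perpmx B); rewrite -(perpmx_adds A B).
have := mxrank_sum_cap A B; rewrite !mxrank_perpmx.
have := rank_leq_col (A + B)%MS; have := rank_leq_col A; have := rank_leq_col B.
have := rank_leq_col (A :&: B)%MS; lia.
Qed.

Lemma capmx_perpmx_eq0 p (W : 'M[R]_(p, n)) S :
  (S <= W)%MS -> ((W :&: perpmx S)%MS == 0) = (W <= S)%MS.
Proof.
move=> sSW; apply/eqP/idP=> [WS0 | sWS].
  rewrite -(mxrank_leqif_sup sSW).2 eqn_leq mxrankS //=.
  by have := mxrank_le_cap_perpmx W S; rewrite WS0 mxrank0 addn0.
by apply/eqP; rewrite -submx0 -(capmx_perpmx S) capmxS.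
Qed.

End Orthogonality.

Lemma lin_indepE (R : realFieldType) n m (v : 'I_m -> 'rV[R]_n) (J : {set 'I_m}) :
  lin_indep v J = (\rank (span v J) == #|J|).
Proof.
set M := \matrix_(j < #|J|) v (enum_val j).
have rowM j : row j M = v (enum_val j) by apply/rowP=> k; rewrite !mxE.
rewrite /lin_indep /row_free; congr (_ == _); apply/eqP; rewrite eqn_leq !mxrankS //.
- apply/sumsmx_subP=> i Ji; rewrite genmxE -(enum_rankK_in Ji Ji) -rowM.
  exact: row_sub.
- apply/row_subP=> j; rewrite rowM (sumsmx_sup (enum_val j)) ?enum_valP ?genmxE //.
Qed.

Section Arrangement.
Variables (R : realFieldType) (n m : nat) (alpha : 'I_m -> 'rV[R]_n) (U : 'M[R]_n).

Local Notation T := (centre alpha).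
Local Notation W := (U :&: (perpmx U + perpmx T))%MS.
Local Notation beta := (beta alpha U).

Lemma sub_flat p (w : 'M[R]_(p, n)) (J : {set 'I_m}) :
  (w <= flat alpha J)%MS = [forall i in J, w *m (alpha i)^T == 0].
Proof. by apply/sub_bigcapmxP/forall_inP=> wJ i /wJ; rewrite /hyp sub_kermx. Qed.

Lemma flat_perpmx (J : {set 'I_m}) : (flat alpha J :=: perpmx (span alpha J))%MS.
Proof.
apply/eqmxP/andP; split.
  by rewrite /perpmx sub_kermx_tr_span -(sub_flat (flat alpha J)).
by rewrite sub_flat -sub_kermx_tr_span.
Qed.

Lemma mulmx_beta p (w : 'M[R]_(p, n)) i :
  (w <= U)%MS -> w *m (beta i)^T = w *m (alpha i)^T.
Proof.
move=> swU; have: (alpha i - beta i <= perpmx U)%MS.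
  by apply: proj_mx_compl_sub; rewrite submx_full ?row_full_addsmx_perpmx.
rewrite /perpmx sub_kermx_trC => /(submx_trans swU).
by rewrite sub_kermx linearB mulmxBr subr_eq0 => /eqP.
Qed.

Lemma W_perpmx : (W :=: U :&: perpmx (U :&: T))%MS.
Proof. exact: cap_eqmx (eqmx_refl U) (eqmx_sym (perpmx_cap U T)). Qed.

Lemma mxrank_W : \rank W = (\rank U - \rank (U :&: T))%N.
Proof. by rewrite W_perpmx mxrank_cap_perpmx ?capmxSl. Qed.

Lemma beta_sub_W i : (beta i <= W)%MS.
Proof.
rewrite W_perpmx sub_capmx proj_mx_sub /perpmx sub_kermx_trC sub_kermx.
rewrite mulmx_beta ?capmxSl // -sub_kermx (submx_trans (capmxSr _ _)) //.
by rewrite (bigcapmx_inf i) ?in_setT.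
Qed.

Lemma span_beta_sub_W (J : {set 'I_m}) : (span beta J <= W)%MS.
Proof. by apply/sumsmx_subP=> i _; rewrite genmxE beta_sub_W. Qed.

Lemma sub_flat_perpmx_beta p (w : 'M[R]_(p, n)) (J : {set 'I_m}) :
  (w <= U)%MS -> (w <= flat alpha J)%MS = (w <= perpmx (span beta J))%MS.
Proof.
move=> swU; rewrite sub_flat /perpmx sub_kermx_tr_span.
by apply: eq_forallb_in=> i _; rewrite mulmx_beta.
Qed.

Lemma capmx_flat_W (J : {set 'I_m}) :
  (flat alpha J :&: W :=: W :&: perpmx (span beta J))%MS.
Proof.
have sWU : (W <= U)%MS by apply: capmxSl.
apply/eqmxP/andP; split; rewrite sub_capmx.
  rewrite capmxSr -sub_flat_perpmx_beta ?capmxSl //.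
  exact: submx_trans (capmxSr _ _) sWU.
rewrite capmxSl andbT sub_flat_perpmx_beta ?capmxSr //.
exact: submx_trans (capmxSl _ _) sWU.
Qed.

Lemma span_beta_setT : (span beta [set: 'I_m] :=: W)%MS.
Proof.
apply/eqmxP; rewrite span_beta_sub_W /= -capmx_perpmx_eq0 ?span_beta_sub_W //.
have sTW_UT : (T :&: W <= U :&: T)%MS.
  by rewrite sub_capmx capmxSl (submx_trans (capmxSr _ _)) ?capmxSl.
have sTW_perp : (T :&: W <= perpmx (U :&: T)%MS)%MS.
  by rewrite (submx_trans (capmxSr _ _)) // W_perpmx capmxSr.
rewrite -submx0 -(capmx_flat_W setT) -(capmx_perpmx (U :&: T)%MS).
by rewrite sub_capmx sTW_UT.
Qed.

Lemma W_sub_span_beta (J : {set 'I_m}) :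
  (W <= span beta J)%MS = (\rank (span beta J) == \rank W).
Proof. by rewrite (mxrank_leqif_sup (span_beta_sub_W J)).2. Qed.

Lemma flat_capW_eq0 (J : {set 'I_m}) :
  (flat alpha J :&: W == (0 : 'M_n))%MS = (W <= span beta J)%MS.
Proof. by rewrite capmx_flat_W submx0 sub0mx andbT capmx_perpmx_eq0 ?span_beta_sub_W. Qed.

Lemma mxrank_flat (J : {set 'I_m}) :
  lin_indep beta J -> \rank (flat alpha J) = (n - #|J|)%N.
Proof.
rewrite lin_indepE flat_perpmx mxrank_perpmx => /eqP freeJ; congr (_ - _)%N.
apply/eqP; rewrite eqn_leq mxrank_span_le_card -{1}freeJ /=.
apply: leq_trans (mxrankM_maxl _ (proj_mx U (perpmx U))); apply: mxrankS.
apply/sumsmx_subP=> i Ji; rewrite genmxE submxMr // (sumsmx_sup i) ?genmxE //.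
Qed.

Lemma addsmx_flat_W_full (J : {set 'I_m}) :
  lin_indep beta J -> #|J| = \rank W -> (flat alpha J + W == 1%:M)%MS.
Proof.
move=> freeJ cardJ; rewrite submx1 sub1mx /row_full /=.
have /andP[/submx0null XW0 _] : (flat alpha J :&: W == (0 : 'M_n))%MS.
  by rewrite flat_capW_eq0 W_sub_span_beta -cardJ -lin_indepE.
have := mxrank_sum_cap (flat alpha J) W.
by rewrite XW0 mxrank0 addn0 mxrank_flat // cardJ => ->; rewrite subnK ?rank_leq_col.
Qed.

End Arrangement.

Theorem lemma3p3 (R : realFieldType) (n m k l : nat)
  (alpha : 'I_m -> 'rV[R]_n) (U : 'M[R]_n) (I : {set 'I_m}) :
  (forall i, alpha i != 0) ->
  \rank U = k ->
  \rank (U :&: centre alpha)%MS = l ->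
  (mbasis alpha U I <-> (#|I| = k - l)%N /\ lin_indep (beta alpha U) I) /\
  ((#|I| = k - l)%N /\ lin_indep (beta alpha U) I <->
     (#|I| = k - l)%N /\ in_LU alpha U (flat alpha I)).
Proof.
move=> _ <- <-; rewrite /in_LU /= -mxrank_W /mbasis /mindep /mrk lin_indepE.
split.
  split=> [[/eqP freeI /(maximal_free_spanP freeI)] | [cardI /eqP freeI]].
    by rewrite span_beta_setT W_sub_span_beta freeI => /eqP.
  split; first exact/eqP.
  by apply/(maximal_free_spanP freeI); rewrite span_beta_setT W_sub_span_beta freeI cardI.
split=> [[cardI freeI] | [cardI [_ [_ XW0]]]]; split=> //.
  rewrite -lin_indepE in freeI; split; [split; first by exists I; rewrite submx_refl | split].
  - by rewrite (mxrank_flat freeI) cardI subKn ?rank_leq_col.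
  - exact: addsmx_flat_W_full.
  - by rewrite flat_capW_eq0 W_sub_span_beta -cardI -lin_indepE.
move: XW0; rewrite flat_capW_eq0 => /mxrankS.
by rewrite -cardI eqn_leq mxrank_span_le_card.
Qed.
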